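(* Let $p$ be a prime number and let $K$ be a commutative ring in which $p$ is invertible. For a finite group $P$, let $\mathsf{CF}_K(P)$ denote the $K$-module of central (class) functions $P\to K$. For finite $p$-groups $P,Q$, a finite $(Q,P)$-biset $U$ and $f\in\mathsf{CF}_K(P)$, define $\mathsf{CF}_K(U)(f):Q\to K$ by $$\forall s\in Q,\quad \mathsf{CF}_K(U)(f)(s)=\frac{1}{|P|}\sum_{\substack{u\in U,\ x\in P\\ su=ux}} f(x).$$ Then $\mathsf{CF}_K(U)(f)\in \mathsf{CF}_K(Q)$, and with these maps the correspondence $P\mapsto \mathsf{CF}_K(P)$ is a rational $p$-biset functor.
   Context: A $p$-biset functor $F$ assigns to each finite $p$-group $P$ an abelian group $F(P)$ and to each finite $(Q,P)$-biset $U$ (a set with commuting left $Q$-action and right $P$-action) a group homomorphism $F(U):F(P)\to F(Q)$, such that $F(U)$ depends only on the isomorphism class of $U$, $F(U\sqcup U')=F(U)+F(U')$, $F$ of the identity $(P,P)$-biset $P$ (left and right multiplication) is the identity, and $F(V)\circ F(U)=F(V\times_Q U)$ for a finite $(R,Q)$-biset $V$, where $V\times_QU$ is the quotient of $V\times U$ by $(vq,u)\sim(v,qu)$. For $N\trianglelefteq P$, ${\rm Def}^P_{P/N}$ and ${\rm Inf}^P_{P/N}$ are $F$ applied to the $(P/N,P)$-biset $P/N$ and the $(P,P/N)$-biset $P/N$ respectively, and for $H\le P$, ${\rm Res}^P_H$ is $F$ applied to the $(H,P)$-biset $P$. The faithful part $\partial F(P)$ is the intersection of the kernels of ${\rm Def}^P_{P/N}$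 over all nontrivial normal subgroups $N$ of $P$. Rationality of $p$-biset functors (in the sense of Bouc) is characterized as follows: $F$ is rational if and only if, for every finite $p$-group $P$: (i) if the center of $P$ is not cyclic then $\partial F(P)=\{0\}$; and (ii) whenever $E\trianglelefteq P$ is a normal elementary abelian subgroup of rank $2$ and $Z\le E$ is a central subgroup of $P$ of order $p$, the map ${\rm Res}^P_{C_P(E)}\oplus{\rm Def}^P_{P/Z}:F(P)\to F(C_P(E))\oplus F(P/Z)$ is injective. *)

From HB Require Import structures.
From mathcomp Require Import all_boot all_order all_algebra all_fingroup all_solvable.
Set Implicit Arguments. Unset Strict Implicit. Unset Printing Implicit Defensive.
Import GRing.Theory.
Local Open Scope group_scope.

(* A finite p-group P is represented by a finGroupType gT (P = [set: gT]). *)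
Record biset (qT pT : finGroupType) := Biset {
  bs_car : finType;
  bs_l : qT -> bs_car -> bs_car;
  bs_r : bs_car -> pT -> bs_car }.
Arguments bs_car {qT pT}.
Arguments bs_l {qT pT}.
Arguments bs_r {qT pT}.

Definition is_biset (qT pT : finGroupType) (U : biset qT pT) : Prop :=
  [/\ (forall u, bs_l U 1 u = u),
      (forall a b u, bs_l U (a * b) u = bs_l U a (bs_l U b u)),
      (forall u, bs_r U u 1 = u),
      (forall u x y, bs_r U u (x * y) = bs_r U (bs_r U u x) y) &
      (forall a u x, bs_l U a (bs_r U u x) = bs_r U (bs_l U a u) x)].

Definition biset_iso (qT pT : finGroupType) (U U' : biset qT pT)
  (phi : bs_car U -> bs_car U') : Prop :=
  [/\ bijective phi,
      (forall a u, phi (bs_l U a u) = bs_l U' a (phi u)) &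
      (forall u x, phi (bs_r U u x) = bs_r U' (phi u) x)].

Definition biset_sum (qT pT : finGroupType) (U U' : biset qT pT) : biset qT pT :=
  @Biset qT pT (bs_car U + bs_car U')%type
    (fun a w => match w with inl u => inl (bs_l U a u) | inr u => inr (bs_l U' a u) end)
    (fun w x => match w with inl u => inl (bs_r U u x) | inr u => inr (bs_r U' u x) end).

Definition id_biset (pT : finGroupType) : biset pT pT :=
  @Biset pT pT pT (fun a x => a * x) (fun x b => x * b).

Definition res_biset (gT : finGroupType) (H : {group gT}) : biset (subg_of H) gT :=
  @Biset (subg_of H) gT gT (fun h x => sgval h * x) (fun x b => x * b).

Definition def_biset (gT : finGroupType) (N : {group gT}) : biset (coset_of N) gT :=
  @Biset (coset_of N) gT (coset_of N) (fun A B => A * B) (fun B x => B * coset N x).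

(* V x_Q U : quotient of V * U by (v q, u) ~ (v, q u); elements are the classes *)
Section Tensor.
Variables (rT qT pT : finGroupType) (V : biset rT qT) (U : biset qT pT).
Definition tens_pair : finType := (bs_car V * bs_car U)%type.
Definition tens_cls (w : tens_pair) : {set tens_pair} :=
  [set (bs_r V w.1 q, bs_l U q^-1 w.2) | q : qT].
Definition tens_classes : {set {set tens_pair}} := tens_cls @: setT.
Definition tens_car : finType := {A : {set tens_pair} | A \in tens_classes}.
Lemma tens_cls_in (w : tens_pair) : tens_cls w \in tens_classes.
Proof. by apply: imset_f; rewrite inE. Qed.
Definition tens_mk (w : tens_pair) : tens_car := exist _ (tens_cls w) (tens_cls_in w).
Definition tens_l (r : rT) (A : tens_car) : tens_car :=
  match [pick w in sval A] with
  | Some w => tens_mk (bs_l V r w.1, w.2)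
  | None => A end.
Definition tens_r (A : tens_car) (x : pT) : tens_car :=
  match [pick w in sval A] with
  | Some w => tens_mk (w.1, bs_r U w.2 x)
  | None => A end.
Definition tensor_biset : biset rT pT := @Biset rT pT tens_car tens_l tens_r.
End Tensor.

Definition is_cf (K : Type) (gT : finGroupType) (f : gT -> K) : Prop :=
  forall x y : gT, f (x ^ y) = f x.

(* CF_K(U)(f)(s) = 1/|P| * sum_{u in U, x in P, s u = u x} f(x);
   with pinv = p^-1 in K and |P| = p ^ (logn p |P|), 1/|P| = pinv ^+ logn p |P|. *)
Definition CF_act (K : comPzRingType) (p : nat) (pinv : K) (qT pT : finGroupType)
  (U : biset qT pT) (f : pT -> K) : qT -> K :=
  fun s => (pinv ^+ logn p #|[set: pT]| *
     \sum_(u : bs_car U) \sum_(x : pT | bs_l U s u == bs_r U u x) f x)%R.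

From HB Require Import structures.
From mathcomp Require Import all_boot all_order all_algebra all_fingroup all_solvable.
Import GRing.Theory.
Set Implicit Arguments. Unset Strict Implicit. Unset Printing Implicit Defensive.
Local Open Scope group_scope.

(** The biset-functor identities are manipulations of the defining double
    sum, except composition.  There, both sides become sums over pairs
    [(v, u)] of [V * U]; the number of [q] in [Q] with [r v = v q] and
    [q u = u x] is the order of the stabiliser of [(v, u)] for the action
    [(v, u) q = (v q, q^-1 u)] when [(r v, u)] and [(v, u x)] lie in one
    orbit (and 0 otherwise), and stabiliser orders summed along an orbit give
    [|Q|], which cancels the extra factor [1/|Q|].

    For rationality, [|N| Def^P_{P/N}(f)(N y)] is the sum of [f] over the coset
    [N y].  (i) A non-cyclic centre contains [E = <a> x <b>] of order [p^2];
    summing the vanishing coset sums along the subgroups [<a^i b>] and using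
    [(a^i b)^k = (a^k)^i b^k], the terms with [k <> 0] regroup into vanishing
    sums along cosets of [<a^k>], leaving [p f(x) = 0].  (ii) For [x] outside
    [C_P(E)] pick [e] in [E] with [z = [x, e] <> 1]; as [E/Z] is central in
    [P/Z], [z] generates [Z], so [x^(e^k) = x z^k] shows that class functions
    are constant on [Z x], and [Def^P_{P/Z}] determines [p f(x)]. *)

Section BisetAxioms.
Variables (qT pT : finGroupType) (U : biset qT pT).
Hypothesis bU : is_biset U.

Lemma bs_l1 u : bs_l U 1 u = u. Proof. by case: bU. Qed.
Lemma bs_lM a b u : bs_l U (a * b) u = bs_l U a (bs_l U b u). Proof. by case: bU. Qed.
Lemma bs_r1 u : bs_r U u 1 = u. Proof. by case: bU. Qed.
Lemma bs_rM u x y : bs_r U u (x * y) = bs_r U (bs_r U u x) y. Proof. by case: bU. Qed.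
Lemma bs_lr a u x : bs_l U a (bs_r U u x) = bs_r U (bs_l U a u) x. Proof. by case: bU. Qed.

Lemma bs_lK a : cancel (bs_l U a) (bs_l U a^-1).
Proof. by move=> u; rewrite -bs_lM mulVg bs_l1. Qed.

Lemma bs_lVK a : cancel (bs_l U a^-1) (bs_l U a).
Proof. by move=> u; rewrite -bs_lM mulgV bs_l1. Qed.

Lemma bs_rK x : cancel (bs_r U ^~ x) (bs_r U ^~ x^-1).
Proof. by move=> u; rewrite -bs_rM mulgV bs_r1. Qed.

End BisetAxioms.

Section TotalActionCounting.
Variables (aT : finGroupType) (T : finType) (to : {action aT &-> T}).

Lemma card_amove (G : {group aT}) x y :
  #|amove to G x y| = if y \in orbit to G x then #|'C_G[x | to]| else 0%N.
Proof.
case: ifP => [/orbitP[a Ga <-]|xGy]; first by rewrite amove_act ?subsetT ?card_rcoset.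
apply/eqP; rewrite cards_eq0; apply/eqP/setP => a; rewrite !inE.
by apply/negbTE/andP => -[Ga /eqP def_y]; rewrite -def_y mem_orbit in xGy.
Qed.

Lemma sum_card_astab1_orbit (G : {group aT}) x :
  (\sum_(y in orbit to G x) #|'C_G[y | to]|)%N = #|G|.
Proof.
have stabE y : y \in orbit to G x -> #|'C_G[y | to]| = (#|G| %/ #|orbit to G x|)%N.
  move=> /orbit_eqP <-; rewrite -(card_orbit_stab to G y) mulKn //.
  by apply/card_gt0P; exists y; apply: orbit_refl.
by rewrite (eq_bigr _ stabE) sum_nat_const mulnC divnK ?dvdn_orbit.
Qed.

Variable h : T -> T.
Hypothesis h_act : forall x a, h (to x a) = to (h x) a.

Lemma orbit_equivariant (G : {group aT}) x y :
  y \in orbit to G x -> orbit to G (h y) = orbit to G (h x).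
Proof. by case/orbitP => a Ga <-; rewrite h_act orbit_act. Qed.

Lemma astab1_equivariant x : injective h -> 'C[h x | to] = 'C[x | to].
Proof.
move=> h_inj; apply/setP => a.
apply/astab1P/astab1P => [|to_xa]; first by rewrite -h_act => /h_inj.
by rewrite -h_act to_xa.
Qed.

End TotalActionCounting.

Section TensorProduct.
Variables (rT qT pT : finGroupType) (V : biset rT qT) (U : biset qT pT).
Hypotheses (bV : is_biset V) (bU : is_biset U).

Definition tens_act (w : tens_pair V U) (q : qT) : tens_pair V U :=
  (bs_r V w.1 q, bs_l U q^-1 w.2).

Lemma tens_act1 : tens_act^~ 1 =1 id.
Proof. by case=> v u; rewrite /tens_act /= invg1 (bs_r1 bV) (bs_l1 bU). Qed.

Lemma tens_actM w : act_morph tens_act w.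
Proof. by case: w => v u a b; rewrite /tens_act /= (bs_rM bV) invMg (bs_lM bU). Qed.

Definition tens_action := TotalAction tens_act1 tens_actM.
Local Notation tens := tens_action.

Definition tens_lmap (r : rT) (w : tens_pair V U) : tens_pair V U := (bs_l V r w.1, w.2).
Definition tens_rmap (x : pT) (w : tens_pair V U) : tens_pair V U := (w.1, bs_r U w.2 x).

Lemma tens_lmap_act r w q : tens_lmap r (tens w q) = tens (tens_lmap r w) q.
Proof. by rewrite /tens_lmap /= /tens_act /= (bs_lr bV). Qed.

Lemma tens_rmap_act x w q : tens_rmap x (tens w q) = tens (tens_rmap x w) q.
Proof. by rewrite /tens_rmap /= /tens_act /= (bs_lr bU). Qed.

Lemma tens_lmap_inj r : injective (tens_lmap r).
Proof. by apply: (can_inj (g := tens_lmap r^-1)) => -[v u]; rewrite /tens_lmap /= (bs_lK bV). Qed.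

Lemma tens_rmap_inj x : injective (tens_rmap x).
Proof. by apply: (can_inj (g := tens_rmap x^-1)) => -[v u]; rewrite /tens_rmap /= (bs_rK bU). Qed.

Lemma tens_clsE w : tens_cls w = orbit tens setT w.
Proof. by apply/setP => w'; apply/imsetP/imsetP => -[q _ ->]; exists q. Qed.

Lemma tens_car_orbit (A : tens_car V U) w : w \in sval A -> sval A = orbit tens setT w.
Proof.
by case: A => /= _ /imsetP[w0 _ ->]; rewrite tens_clsE => /orbit_eqP ->.
Qed.

Lemma tens_car_nonempty (A : tens_car V U) : exists w, w \in sval A.
Proof. by case: A => /= _ /imsetP[w _ ->]; exists w; rewrite tens_clsE orbit_refl. Qed.

Lemma tens_mk_eq w w' : (tens_mk w == tens_mk w') = (w \in orbit tens setT w').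
Proof. by rewrite -val_eqE /= !tens_clsE orbit_eq_mem. Qed.

Lemma tens_mkP w (A : tens_car V U) : (tens_mk w == A) = (w \in sval A).
Proof.
have [w0 w0A] := tens_car_nonempty A.
have -> : A = tens_mk w0 by apply: val_inj; rewrite /= tens_clsE (tens_car_orbit w0A).
by rewrite tens_mk_eq /= tens_clsE.
Qed.

Lemma tens_lE r (A : tens_car V U) w : w \in sval A -> tens_l r A = tens_mk (tens_lmap r w).
Proof.
move=> wA; rewrite /tens_l; case: pickP => [w' w'A|/(_ w)]; last by rewrite wA.
apply: val_inj; rewrite /= !tens_clsE; apply: (orbit_equivariant (tens_lmap_act r)).
by rewrite -(tens_car_orbit wA).
Qed.

Lemma tens_rE x (A : tens_car V U) w : w \in sval A -> tens_r A x = tens_mk (tens_rmap x w).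
Proof.
move=> wA; rewrite /tens_r; case: pickP => [w' w'A|/(_ w)]; last by rewrite wA.
apply: val_inj; rewrite /= !tens_clsE; apply: (orbit_equivariant (tens_rmap_act x)).
by rewrite -(tens_car_orbit wA).
Qed.

Lemma card_tens_transporter r x w :
  #|[set q : qT | (bs_l V r w.1 == bs_r V w.1 q) && (bs_l U q w.2 == bs_r U w.2 x)]| =
  if tens_lmap r w \in orbit tens setT (tens_rmap x w) then #|'C_setT[w | tens]| else 0%N.
Proof.
rewrite -(astab1_equivariant (tens_rmap_act x) _ (tens_rmap_inj (x := x))) -card_amove.
apply: eq_card => q; rewrite !inE /= xpair_eqE eq_sym.
by rewrite (canF_eq (bs_lVK bU q)) [_ == bs_l U q _]eq_sym.
Qed.

Lemma sum_tensor_transporter (M : nmodType) (f : pT -> M) r :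
  (\sum_(v : bs_car V) \sum_(q | bs_l V r v == bs_r V v q)
     \sum_(u : bs_car U) \sum_(x | bs_l U q u == bs_r U u x) f x
   = (\sum_(A : tens_car V U) \sum_(x | tens_l r A == tens_r A x) f x) *+ #|[set: qT]|)%R.
Proof.
pose n (w : tens_pair V U) x :=
  #|[set q : qT | (bs_l V r w.1 == bs_r V w.1 q) && (bs_l U q w.2 == bs_r U w.2 x)]|.
transitivity (\sum_(w : tens_pair V U) \sum_x f x *+ n w x)%R.
  rewrite -(pair_bigA _ (fun v u => \sum_x f x *+ n (v, u) x))%R /=.
  apply: eq_bigr => v _; rewrite exchange_big /=; apply: eq_bigr => u _.
  under eq_bigr do rewrite big_mkcond.
  rewrite exchange_big /=; apply: eq_bigr => x _.
  by rewrite -big_mkcondr sumr_const; congr (_ *+ _)%R; apply: eq_card => q; rewrite inE.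
rewrite (partition_big (@tens_mk _ _ _ V U) xpredT) //= -sumrMnl.
apply: eq_bigr => A _; rewrite exchange_big /= (big_mkcond (fun x => tens_l r A == tens_r A x)).
rewrite -sumrMnl; apply: eq_bigr => x _; rewrite sumrMnr.
have [w0 w0A] := tens_car_nonempty A.
have nE w : w \in sval A ->
    n w x = if tens_l r A == tens_r A x then #|'C_setT[w | tens]| else 0%N.
  by move=> wA; rewrite /n card_tens_transporter (tens_lE r wA) (tens_rE x wA) tens_mk_eq.
under eq_bigl do rewrite tens_mkP.
rewrite (eq_bigr _ nE); case: ifP => _; last by rewrite big1 ?mulr0n ?mul0rn.
by rewrite (tens_car_orbit w0A) sum_card_astab1_orbit.
Qed.

End TensorProduct.

Section GroupSums.
Variables (M : nmodType) (gT : finGroupType).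

Lemma sum_rcoset (N : {set gT}) y (F : gT -> M) :
  (\sum_(x in N :* y) F x = \sum_(z in N) F (z * y)%g)%R.
Proof.
rewrite -rcosetE /rcoset big_imset //=; last by move=> a b _ _; apply: mulIg.
Qed.

Lemma sum_cycle (c : gT) (F : gT -> M) :
  (\sum_(z in <[c]>) F z = \sum_(k < #[c]) F (c ^+ k)%g)%R.
Proof.
have ->: <[c]> = [set c ^+ (val k) | k : 'I_#[c]].
  apply/setP => z; apply/idP/imsetP => [/cyclePmin[i lt_i ->]|[k _ ->]].
    by exists (Ordinal lt_i).
  by rewrite mem_cycle.
rewrite big_imset //= => i j _ _ /eqP; rewrite eq_expg_mod_order !modn_small //.
by move/eqP; apply: val_inj.
Qed.

Lemma sum_conjg_class_fun (f : gT -> M) a : is_cf f ->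
  (\sum_(u : gT) \sum_(x | (a * u == u * x)%g) f x = f a *+ #|[set: gT]|)%R.
Proof.
move=> cf; rewrite cardsT -sumr_const; apply: eq_bigr => u _.
rewrite (big_pred1 (a ^ u)) ?cf // => x /=.
by rewrite conjgE -(inj_eq (mulgI u^-1)) mulKg eq_sym.
Qed.

End GroupSums.

Section GroupFacts.
Variables (gT : finGroupType) (p : nat).
Hypothesis p_pr : prime p.

Lemma abelem_sum_cycles_eq0 (M : nmodType) (E : {group gT}) (f : gT -> M) x :
  p.-abelem E -> #|E| = (p ^ 2)%N ->
  (forall c y, c \in E -> c != 1 -> (\sum_(k < p) f (c ^+ k * y)%g = 0)%R) ->
  (f x *+ p = 0)%R.
Proof.
move=> abE oE sum0; have p_gt1 := prime_gt1 p_pr; have p_gt0 := ltnW p_gt1.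
have cEE := abelem_abelian abE.
have /trivgPn[a Ea a_nt] : E :!=: 1 by rewrite -cardG_gt1 oE (ltn_exp2l 0).
have oa := abelem_order_p abE Ea a_nt.
have /subsetPn[b Eb bNa] : ~~ (E \subset <[a]>).
  by apply/negP => /subset_leq_card; rewrite -orderE oa oE leqNgt (ltn_exp2l 1).
pose c i := a ^+ i * b.
have Ec i : c i \in E by rewrite groupM ?groupX.
have c_nt i : c i != 1.
  by apply: contra bNa => /eqP ci1; rewrite -(mulKg (a ^+ i) b) -/(c i) ci1 mulg1 groupV mem_cycle.
have: (\sum_(i < p) \sum_(k < p) f (c i ^+ k * x)%g = 0)%R by apply: big1 => i _; apply: sum0.
rewrite exchange_big /= (bigD1 (Ordinal p_gt0)) //= [X in (_ + X)%R]big1 ?addr0; last first.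
  move=> k; rewrite -val_eqE /= => k_nz.
  have ak_nt : a ^+ k != 1 by rewrite -order_dvdn oa gtnNdvd ?lt0n.
  rewrite -[RHS](sum0 (a ^+ k) (b ^+ k * x) (groupX k Ea) ak_nt).
  apply: eq_bigr => i _; rewrite /c expgMn; last exact: (centsP cEE) (groupX i Ea) b Eb.
  by rewrite -!expgM mulnC mulgA.
under eq_bigr do rewrite expg0 mul1g.
by rewrite sumr_const card_ord.
Qed.

Lemma commg_sub_index_prime (G E Z : {group gT}) :
  p.-group G -> E <| G -> Z <| G -> Z \subset E -> #|E : Z| = p -> [~: G, E] \subset Z.
Proof.
move=> pG nsEG nsZG sZE iEZ.
have nZG := normal_norm nsZG; have nZE := subset_trans (normal_sub nsEG) nZG.
rewrite -quotient_cents2 // centsC.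
have oEZ : #|E / Z| = p by rewrite card_quotient.
have ntEZ : E / Z :!=: 1 by rewrite -cardG_gt1 oEZ prime_gt1.
suff: E / Z \subset 'Z(G / Z) by move/subset_trans; apply; apply: subsetIr.
apply/negPn/negP => nsub.
have := meet_center_nil (pgroup_nil (quotient_pgroup Z pG)) (quotient_normal Z nsEG) ntEZ.
by rewrite prime_TIg ?oEZ // eqxx.
Qed.

Lemma cf_mul_cycle_commg (T : Type) (h : gT -> T) x e :
  is_cf h -> [~ x, e] \in 'Z([set: gT]) -> {in <[ [~ x, e] ]>, forall n, h (n * x) = h x}.
Proof.
set z := [~ x, e] => cf zZ _ /cycleP[k ->].
have cz y : commute z y by case/centerP: zZ => _; apply; rewrite inE.
have conj_ek i : x ^ (e ^+ i) = x * z ^+ i.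
  elim: i => [|i IHi]; first by rewrite expg0 conjg1 mulg1.
  rewrite expgSr conjgM IHi conjMg conjg_mulR -/z conjXg.
  have /conjg_fixP -> : [~ z, e] == 1 by apply/commgP.
  by rewrite -mulgA -expgS.
by rewrite -(commuteX k (commute_sym (cz x))) -conj_ek cf.
Qed.

End GroupFacts.

Section ClassFunctionBisetFunctor.
Variables (p : nat) (K : comPzRingType) (pinv : K).
Local Notation CF := (CF_act p pinv).

Lemma CF_act_is_cf (qT pT : finGroupType) (U : biset qT pT) (f : pT -> K) :
  is_biset U -> is_cf (CF U f).
Proof.
move=> bU s a; rewrite /CF_act; congr (_ * _)%R.
rewrite [RHS](reindex_inj (can_inj (bs_lK bU a))); apply: eq_bigr => u _.
apply: eq_bigl => x; rewrite conjgE !(bs_lM bU) (canF_eq (bs_lVK bU a)).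
by rewrite (bs_lr bU).
Qed.

Lemma CF_actD (qT pT : finGroupType) (U : biset qT pT) (f g : pT -> K) :
  CF U (fun x => f x + g x)%R =1 (fun s => CF U f s + CF U g s)%R.
Proof.
move=> s; rewrite /CF_act -mulrDr -big_split /=; congr (_ * _)%R.
by apply: eq_bigr => u _; rewrite big_split.
Qed.

Lemma CF_act_iso (qT pT : finGroupType) (U U' : biset qT pT) (phi : bs_car U -> bs_car U')
    (f : pT -> K) :
  biset_iso phi -> CF U f =1 CF U' f.
Proof.
case=> phi_bij phi_l phi_r s; rewrite /CF_act; congr (_ * _)%R.
rewrite (reindex phi); last exact: onW_bij.
by apply: eq_bigr => u _; apply: eq_bigl => x; rewrite -phi_l -phi_r (bij_eq phi_bij).
Qed.

Lemma CF_act_biset_sum (qT pT : finGroupType) (U U' : biset qT pT) (f : pT -> K) :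
  CF (biset_sum U U') f =1 (fun s => CF U f s + CF U' f s)%R.
Proof. by move=> s; rewrite /CF_act -mulrDr big_sumType. Qed.

Hypothesis pinvP : (pinv * p%:R = 1)%R.

Lemma pinvX_card_pgroup (gT : finGroupType) (G : {group gT}) :
  p.-group G -> (pinv ^+ logn p #|G| * #|G|%:R = 1)%R.
Proof. by move=> pG; rewrite {2}(card_pgroup pG) natrX -exprMn pinvP expr1n. Qed.

Lemma CF_act_id (pT : finGroupType) (f : pT -> K) :
  p.-group [set: pT] -> is_cf f -> CF (id_biset pT) f =1 f.
Proof.
move=> pP cf s; rewrite /CF_act /= sum_conjg_class_fun //.
by rewrite -mulr_natl mulrA pinvX_card_pgroup // mul1r.
Qed.

Lemma CF_act_res (gT : finGroupType) (H : {group gT}) (f : gT -> K) :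
  p.-group [set: gT] -> is_cf f -> CF (res_biset H) f =1 (fun s => f (sgval s)).
Proof.
move=> pG cf s; rewrite /CF_act /= sum_conjg_class_fun //.
by rewrite -mulr_natl mulrA pinvX_card_pgroup // mul1r.
Qed.

Lemma CF_act_tensor (rT qT pT : finGroupType) (V : biset rT qT) (U : biset qT pT)
    (f : pT -> K) :
  p.-group [set: qT] -> is_biset V -> is_biset U ->
  CF V (CF U f) =1 CF (tensor_biset V U) f.
Proof.
move=> pQ bV bU r; rewrite /CF_act /=.
under eq_bigr do rewrite -mulr_sumr.
rewrite -mulr_sumr sum_tensor_transporter // -mulr_natl mulrCA.
by rewrite [X in (_ * X)%R]mulrA pinvX_card_pgroup // mul1r.
Qed.

Lemma CF_act_def_biset (gT : finGroupType) (N : {group gT}) (f : gT -> K) y :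
  p.-group [set: gT] -> N <| [set: gT] -> is_cf f ->
  (CF (def_biset N) f (coset N y) * #|N|%:R = \sum_(x in N :* y) f x)%R.
Proof.
move=> pG nsN cf; have nN z : z \in 'N(N) by rewrite (subsetP (normal_norm nsN)) ?inE.
have fiberE (u : coset_of N) :
    (\sum_(x | (coset N y * u == u * coset N x)%g) f x = \sum_(x in N :* y) f x)%R.
  rewrite -(coset_reprK u); set g := repr u.
  rewrite (reindex_inj (@conjg_inj _ g)); apply: eq_big => x /=; last by rewrite cf.
  rewrite -!morphM ?nN // -conjgC !morphM ?nN // (inj_eq (mulIg _)) eq_sym.
  by apply/eqP/rcoset_kercosetP; rewrite ?nN.
have cardQ : (#|{: coset_of N}| * #|N| = #|[set: gT]|)%N.
  by rewrite -cardsT -quotientT card_quotient ?normal_norm // mulnC Lagrange ?subsetT.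
set S := (\sum_(x in N :* y) f x)%R; rewrite /CF_act (eq_bigr _ (fun u _ => fiberE u)) sumr_const.
by rewrite -[(S *+ _)%R]mulr_natr mulrCA -!mulrA -natrM cardQ pinvX_card_pgroup ?mulr1.
Qed.

Lemma CF_eq0_noncyclic_center (gT : finGroupType) (f : gT -> K) :
  prime p -> p.-group [set: gT] -> ~~ cyclic 'Z([set: gT]) -> is_cf f ->
  (forall N : {group gT}, N <| [set: gT] -> N :!=: 1 ->
     CF (def_biset N) f =1 (fun _ => 0%R)) ->
  f =1 (fun _ => 0%R).
Proof.
move=> p_pr pG ncycZ cf deff0 x.
have pZ : p.-group 'Z([set: gT]) := pgroupS (center_sub _) pG.
have /p_rank_geP[E /pnElemPcard[sEZ abE oE]] : 1 < 'r_p('Z([set: gT])).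
  by rewrite -(rank_pgroup pZ) ltnNge -abelian_rank1_cyclic ?center_abelian.
have sum0 c y : c \in E -> c != 1 -> (\sum_(k < p) f (c ^+ k * y)%g = 0)%R.
  move=> Ec c_nt; have nsC : <[c]>%G <| [set: gT].
    by apply: sub_center_normal; rewrite cycle_subG (subsetP sEZ).
  have := CF_act_def_biset y pG nsC cf; rewrite deff0 ?cycle_eq1 // mul0r.
  by rewrite sum_rcoset sum_cycle (abelem_order_p abE Ec c_nt) => <-.
have fp0 := abelem_sum_cycles_eq0 p_pr x abE oE sum0.
by rewrite -[f x]mul1r -pinvP -mulrA mulr_natl fp0 mulr0.
Qed.

Lemma CF_res_def_inj (gT : finGroupType) (E Z : {group gT}) (f g : gT -> K) :
  prime p -> p.-group [set: gT] ->
  E <| [set: gT] -> p.-abelem E -> logn p #|E| = 2 ->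
  Z \subset E -> Z \subset 'Z([set: gT]) -> #|Z| = p ->
  is_cf f -> is_cf g ->
  CF (res_biset 'C(E)%G) f =1 CF (res_biset 'C(E)%G) g ->
  CF (def_biset Z) f =1 CF (def_biset Z) g ->
  f =1 g.
Proof.
move=> p_pr pG nsE abE dimE sZE sZZ oZ cf cg res_fg def_fg x.
have [cEx|nCEx] := boolP (x \in 'C(E)).
  by have := res_fg (subg 'C(E)%G x); rewrite !CF_act_res // subgK.
have /subsetPn[e Ee nce] : ~~ (E \subset 'C[x]) by rewrite sub_cent1.
set z := [~ x, e].
have ntz : z != 1.
  by apply: contra nce => /commgP cxe; apply/cent1P; apply: commute_sym.
have nsZ : Z <| [set: gT] := sub_center_normal sZZ.
have iEZ : #|E : Z| = p.
  rewrite -divgS // (card_pgroup (abelem_pgroup abE)) dimE oZ.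
  by rewrite expnS expn1 mulKn ?prime_gt0.
have zZ : z \in Z.
  by apply: subsetP (commg_sub_index_prime p_pr pG nsE nsZ sZE iEZ) _ (mem_commg _ Ee); rewrite inE.
have sZz : Z \subset <[z]>.
  apply: contraR ntz => nsZz.
  have: z \in Z :&: <[z]> by rewrite inE zZ cycle_id.
  by rewrite prime_TIg ?oZ // inE.
have sum_coset (h : gT -> K) : is_cf h -> (\sum_(y in Z :* x) h y = h x *+ p)%R.
  move=> ch; rewrite sum_rcoset -oZ -sumr_const; apply: eq_bigr => n Zn.
  exact: (cf_mul_cycle_commg ch (subsetP sZZ z zZ) (subsetP sZz n Zn)).
have := congr1 (fun a => a * #|Z|%:R)%R (def_fg (coset Z x)).
rewrite /= !CF_act_def_biset // !sum_coset // => fgp.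
by rewrite -[f x]mul1r -[g x]mul1r -pinvP -!mulrA !mulr_natl fgp.
Qed.

End ClassFunctionBisetFunctor.

Unset Implicit Arguments.

Theorem proposition2p4 (p : nat) (K : comPzRingType) (pinv : K) :
  prime p -> (pinv * p%:R = 1)%R ->
  let F := @CF_act K p pinv in
  (forall (qT pT : finGroupType) (U : biset qT pT) (f : pT -> K),
     p.-group [set: qT] -> p.-group [set: pT] -> is_biset U ->
     is_cf f -> is_cf (F _ _ U f)) /\
  (forall (qT pT : finGroupType) (U : biset qT pT) (f g : pT -> K),
     p.-group [set: qT] -> p.-group [set: pT] -> is_biset U ->
     is_cf f -> is_cf g ->
     F _ _ U (fun x => f x + g x)%R =1 (fun s => F _ _ U f s + F _ _ U g s)%R) /\
  (forall (qT pT : finGroupType) (U U' : biset qT pT) (phi : bs_car U -> bs_car U')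
          (f : pT -> K),
     p.-group [set: qT] -> p.-group [set: pT] -> is_biset U -> is_biset U' ->
     biset_iso phi -> is_cf f -> F _ _ U f =1 F _ _ U' f) /\
  (forall (qT pT : finGroupType) (U U' : biset qT pT) (f : pT -> K),
     p.-group [set: qT] -> p.-group [set: pT] -> is_biset U -> is_biset U' ->
     is_cf f ->
     F _ _ (biset_sum U U') f =1 (fun s => F _ _ U f s + F _ _ U' f s)%R) /\
  (forall (pT : finGroupType) (f : pT -> K),
     p.-group [set: pT] -> is_cf f -> F _ _ (id_biset pT) f =1 f) /\
  (forall (rT qT pT : finGroupType) (V : biset rT qT) (U : biset qT pT) (f : pT -> K),
     p.-group [set: rT] -> p.-group [set: qT] -> p.-group [set: pT] ->
     is_biset V -> is_biset U -> is_cf f ->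
     F _ _ V (F _ _ U f) =1 F _ _ (tensor_biset V U) f) /\
  (forall (gT : finGroupType) (f : gT -> K),
     p.-group [set: gT] -> ~~ cyclic 'Z([set: gT]) -> is_cf f ->
     (forall N : {group gT}, N <| [set: gT] -> N :!=: 1%g ->
        F _ _ (def_biset N) f =1 (fun _ => 0%R)) ->
     f =1 (fun _ => 0%R)) /\
  (forall (gT : finGroupType) (E Z : {group gT}) (f g : gT -> K),
     p.-group [set: gT] ->
     E <| [set: gT] -> p.-abelem E -> logn p #|E| = 2 ->
     Z \subset E -> Z \subset 'Z([set: gT]) -> #|Z| = p ->
     is_cf f -> is_cf g ->
     F _ _ (res_biset 'C(E)%G) f =1 F _ _ (res_biset 'C(E)%G) g ->
     F _ _ (def_biset Z) f =1 F _ _ (def_biset Z) g ->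
     f =1 g).
Proof.
move=> p_pr pinvP F.
split=> [qT pT U f _ _ bU _|]; first exact: CF_act_is_cf.
split=> [qT pT U f g *|]; first exact: CF_actD.
split=> [qT pT U U' phi f _ _ _ _ iso _|]; first exact: CF_act_iso iso.
split=> [qT pT U U' f *|]; first exact: CF_act_biset_sum.
split=> [pT f|]; first exact: CF_act_id.
split=> [rT qT pT V U f _ pQ _ bV bU _|]; first exact: CF_act_tensor.
split=> [gT f pG|gT E Z f g pG]; first exact: CF_eq0_noncyclic_center.
exact: CF_res_def_inj.
Qed.
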